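(* Let $\Omega\subset\mathbb{R}^2$ be open, $\lambda>0$, and let $u\in L^2(\Omega)$ satisfy $-\Delta u=\lambda u$ in $\Omega$. Let $\mathbf{x}_0\in\Omega$, $h>0$, $\alpha\in(0,1)$, and let $\mathbf{e}^-,\mathbf{e}^+$ be unit vectors with angle $\alpha\pi$ from $\mathbf{e}^-$ to $\mathbf{e}^+$; put $\Gamma^\pm=\{\mathbf{x}_0+t\mathbf{e}^\pm:0\le t\le h\}\subset\Omega$. Suppose $\Gamma^+$ is a generalized singular line of $u$ with constant parameter $\eta_2\equiv C_2$, and $\Gamma^-$ is a nodal line of $u$ ($u=0$ on $\Gamma^-$). Let $n\in\mathbb{N}$, $n\ge2$. If $\alpha\neq\frac{2q+1}{2p}$ for all integers $p,q$ with $1\le p\le n-1$ and $0\le q\le p-1$, then $u$ vanishes up to the order $n$ at $\mathbf{x}_0$, i.e. all partial derivatives of $u$ of order at most $n-1$ vanish at $\mathbf{x}_0$.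
   Context: No boundary condition is imposed on $\partial\Omega$; $u$ is real-analytic in $\Omega$. A line segment $\Gamma\subset\Omega$ is a generalized singular line with parameter $\eta$ (a complex-valued function not identically zero; here a nonzero complex constant) if $\partial_\nu u+\eta u=0$ on $\Gamma$, $\nu$ a unit normal to $\Gamma$. ''Vanishes up to order $n$'' means every homogeneous term of degree $<n$ in the Taylor expansion of $u$ at $\mathbf{x}_0$ vanishes. *)

From Stdlib Require Import Reals Lra List.
From Coquelicot Require Import Coquelicot.
Open Scope R_scope.

Definition dx (f : R -> R -> R) : R -> R -> R :=
  fun x y => Derive (fun t => f t y) x.
Definition dy (f : R -> R -> R) : R -> R -> R :=
  fun x y => Derive (fun t => f x t) y.

(* Iterated partial derivative: [false] = d/dx, [true] = d/dy;
   the list records the order of differentiation (innermost first). *)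
Fixpoint pderiv (l : list bool) (f : R -> R -> R) : R -> R -> R :=
  match l with
  | nil => f
  | b :: l' => pderiv l' (if b then dy f else dx f)
  end.

Definition ure (u : R -> R -> C) : R -> R -> R := fun x y => Re (u x y).
Definition uim (u : R -> R -> C) : R -> R -> R := fun x y => Im (u x y).

Definition cdx (u : R -> R -> C) : R -> R -> C :=
  fun x y => (dx (ure u) x y, dx (uim u) x y).
Definition cdy (u : R -> R -> C) : R -> R -> C :=
  fun x y => (dy (ure u) x y, dy (uim u) x y).

Definition smooth_on (Om : R * R -> Prop) (u : R -> R -> C) : Prop :=
  forall (l : list bool) (p : R * R), Om p ->
    differentiable_pt (pderiv l (ure u)) (fst p) (snd p) /\
    differentiable_pt (pderiv l (uim u)) (fst p) (snd p).

Definition laplacian (u : R -> R -> C) : R -> R -> C :=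
  fun x y => (dx (dx (ure u)) x y + dy (dy (ure u)) x y,
              dx (dx (uim u)) x y + dy (dy (uim u)) x y).

Definition helmholtz_on (Om : R * R -> Prop) (lam : R) (u : R -> R -> C) : Prop :=
  forall p : R * R, Om p ->
    Copp (laplacian u (fst p) (snd p)) = Cmult (RtoC lam) (u (fst p) (snd p)).

Definition segment (x0 e : R * R) (h : R) : R * R -> Prop :=
  fun p => exists t, 0 <= t <= h /\ p = (fst x0 + t * fst e, snd x0 + t * snd e).

Definition normal_deriv (nu : R * R) (u : R -> R -> C) : R -> R -> C :=
  fun x y => Cplus (Cmult (RtoC (fst nu)) (cdx u x y))
                   (Cmult (RtoC (snd nu)) (cdy u x y)).

Definition gen_singular_line (Gam : R * R -> Prop) (nu : R * R) (eta : C)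
    (u : R -> R -> C) : Prop :=
  eta <> RtoC 0 /\
  forall p, Gam p ->
    Cplus (normal_deriv nu u (fst p) (snd p)) (Cmult eta (u (fst p) (snd p))) = RtoC 0.

Definition nodal_line (Gam : R * R -> Prop) (u : R -> R -> C) : Prop :=
  forall p, Gam p -> u (fst p) (snd p) = RtoC 0.

Definition vanishes_up_to_order (n : nat) (u : R -> R -> C) (x0 : R * R) : Prop :=
  forall l : list bool, (length l < n)%nat ->
    pderiv l (ure u) (fst x0) (snd x0) = 0 /\
    pderiv l (uim u) (fst x0) (snd x0) = 0.

Definition rot (th : R) (e : R * R) : R * R :=
  (cos th * fst e - sin th * snd e, sin th * fst e + cos th * snd e).

From Stdlib Require Import Reals List Permutation Lra Lia ZArith.
From Coquelicot Require Import Coquelicot.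
Open Scope R_scope.

(* Once the derivatives of u of order < N vanish at x0, the
   derivatives of order N form a symmetric N-tensor which the Helmholtz equation makes
   traceless, so in two dimensions, in the frame of e^- and its normal, it is
   B Im(z_1 ... z_N) + A Re(z_1 ... z_N), where the directions are read as complex numbers z_i.
   Differentiating along the nodal line gives D_{e^-}^N u(x0) = 0, i.e. A = 0.  On the singular
   line, D_{e^+}^{N-1} (D_nu u + eta u) vanishes at x0; its zero-order part is of order N - 1,
   so D_{e^+}^{N-1} D_nu u(x0) = B cos(N alpha pi) = 0, and B = 0 since alpha <> (2q+1)/(2N). *)

Definition lincomb (a : R) (G1 : R -> R -> R) (b : R) (G2 : R -> R -> R) : R -> R -> R :=
  fun x y => a * G1 x y + b * G2 x y.

Definition ddir (v : R * R) (G : R -> R -> R) : R -> R -> R :=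
  lincomb (fst v) (dx G) (snd v) (dy G).

Definition ddirs (w : list (R * R)) (G : R -> R -> R) : R -> R -> R :=
  fold_left (fun H v => ddir v H) w G.

Definition eq_in (Om : R * R -> Prop) (G1 G2 : R -> R -> R) : Prop :=
  forall x y, Om (x, y) -> G1 x y = G2 x y.

Definition smooth_in (Om : R * R -> Prop) (G : R -> R -> R) : Prop :=
  forall l x y, Om (x, y) -> differentiable_pt (pderiv l G) x y.

Definition frame (a b : R * R) (bit : bool) : R * R := if bit then b else a.

Lemma ddirs_app w1 w2 G : ddirs (w1 ++ w2) G = ddirs w2 (ddirs w1 G).
Proof. apply fold_left_app. Qed.

Lemma ddirs_repeat_S e k G : ddirs (repeat e (S k)) G = ddir e (ddirs (repeat e k) G).
Proof. rewrite <- (Nat.add_1_r k), repeat_app, ddirs_app. reflexivity. Qed.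

Lemma differentiable_pt_ex_derive G x y : differentiable_pt G x y ->
  ex_derive (fun t => G t y) x /\ ex_derive (fun t => G x t) y.
Proof.
  intros [lx [ly H]]. split.
  - exists (lx * 1 + ly * 0). apply is_derive_Reals.
    apply (derivable_pt_lim_comp_2d G (fun t => t) (fun _ => y) x lx ly 1 0 H).
    + apply derivable_pt_lim_id.
    + apply derivable_pt_lim_const.
  - exists (lx * 0 + ly * 1). apply is_derive_Reals.
    apply (derivable_pt_lim_comp_2d G (fun _ => x) (fun t => t) y lx ly 0 1 H).
    + apply derivable_pt_lim_const.
    + apply derivable_pt_lim_id.
Qed.

Lemma differentiable_pt_lincomb a b G1 G2 x y :
  differentiable_pt G1 x y -> differentiable_pt G2 x y ->
  differentiable_pt (lincomb a G1 b G2) x y.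
Proof.
  intros [l1x [l1y H1]] [l2x [l2y H2]].
  exists (a * l1x + b * l2x), (a * l1y + b * l2y).
  apply (differentiable_pt_lim_comp (fun u v => a * u + b * v) G1 G2 x y a b); [|exact H1|exact H2].
  intros eps. exists eps. intros u v _ _.
  replace (a * u + b * v - (a * G1 x y + b * G2 x y) - (a * (u - G1 x y) + b * (v - G2 x y)))
    with 0 by ring.
  rewrite Rabs_R0. apply Rmult_le_pos; [left; apply cond_pos|].
  apply Rle_trans with (Rabs (u - G1 x y)); [apply Rabs_pos|apply Rmax_l].
Qed.

Lemma derivable_pt_lim_along_line H x y e t :
  differentiable_pt H (x + t * fst e) (y + t * snd e) ->
  derivable_pt_lim (fun s => H (x + s * fst e) (y + s * snd e)) t
    (ddir e H (x + t * fst e) (y + t * snd e)).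
Proof.
  intros [lx [ly D]].
  destruct (differentiable_pt_lim_unique _ _ _ _ _ D) as [Ex Ey].
  unfold ddir, lincomb, dx, dy. rewrite Ex, Ey.
  replace (fst e * lx + snd e * ly) with (lx * fst e + ly * snd e) by ring.
  apply (derivable_pt_lim_comp_2d H (fun s => x + s * fst e) (fun s => y + s * snd e)); auto;
    apply is_derive_Reals; auto_derive; auto; ring.
Qed.

Lemma ddir_eq0_on_open_segment K x y e h :
  (forall t, 0 < t < h -> differentiable_pt K (x + t * fst e) (y + t * snd e)) ->
  (forall t, 0 < t < h -> K (x + t * fst e) (y + t * snd e) = 0) ->
  forall t, 0 < t < h -> ddir e K (x + t * fst e) (y + t * snd e) = 0.
Proof.
  intros HK K0 t Ht.
  apply (uniqueness_limite (fun s => K (x + s * fst e) (y + s * snd e)) t);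
    [now apply derivable_pt_lim_along_line, HK|].
  apply is_derive_Reals, (is_derive_ext_loc (fun _ => 0)); [|auto_derive; auto].
  assert (Hr : 0 < Rmin t (h - t)) by (apply Rmin_glb_lt; lra).
  exists (mkposreal _ Hr). intros s Hs.
  change (Rabs (s - t) < Rmin t (h - t)) in Hs.
  apply Rabs_def2 in Hs. pose proof (Rmin_l t (h - t)). pose proof (Rmin_r t (h - t)).
  symmetry. apply K0. lra.
Qed.

Lemma eq0_at_left_endpoint f h : 0 < h -> continuity_pt f 0 ->
  (forall t, 0 < t < h -> f t = 0) -> f 0 = 0.
Proof.
  intros Hh Hc Hf. apply continuity_pt_filterlim in Hc.
  apply (filterlim_locally_unique (F := at_right 0) f).
  - exact (filterlim_filter_le_1 f (filter_le_within (F := locally 0) _) Hc).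
  - apply (filterlim_ext_loc (fun _ => 0)); [|apply filterlim_const].
    exists (mkposreal h Hh). intros t Ht Hpos.
    change (Rabs (t - 0) < h) in Ht. rewrite Rminus_0_r in Ht.
    apply Rabs_def2 in Ht. symmetry. apply Hf. lra.
Qed.

Section Directional_derivatives.

Variable Om : R * R -> Prop.
Hypothesis Om_open : open Om.

Lemma locally_2d_in x y : Om (x, y) -> locally_2d (fun u v => Om (u, v)) x y.
Proof.
  intros H. apply locally_2d_locally.
  eapply filter_imp; [|exact (Om_open (x, y) H)]. now intros [u v].
Qed.

Lemma eq_in_trans G1 G2 G3 : eq_in Om G1 G2 -> eq_in Om G2 G3 -> eq_in Om G1 G3.
Proof. intros E1 E2 x y H. rewrite E1; auto. Qed.

Lemma dx_eq_in G1 G2 : eq_in Om G1 G2 -> eq_in Om (dx G1) (dx G2).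
Proof.
  intros E x y H. apply Derive_ext_loc.
  apply (locally_2d_1d_const_y (fun u v => G1 u v = G2 u v)).
  eapply locally_2d_impl; [|exact (locally_2d_in x y H)].
  apply locally_2d_forall. intros u v. apply E.
Qed.

Lemma dy_eq_in G1 G2 : eq_in Om G1 G2 -> eq_in Om (dy G1) (dy G2).
Proof.
  intros E x y H. apply Derive_ext_loc.
  apply (locally_2d_1d_const_x (fun u v => G1 u v = G2 u v)).
  eapply locally_2d_impl; [|exact (locally_2d_in x y H)].
  apply locally_2d_forall. intros u v. apply E.
Qed.

Lemma pderiv_eq_in l : forall G1 G2, eq_in Om G1 G2 -> eq_in Om (pderiv l G1) (pderiv l G2).
Proof.
  induction l as [|[] l IH]; intros G1 G2 E; simpl; auto.
  - apply IH, dy_eq_in, E.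
  - apply IH, dx_eq_in, E.
Qed.

Lemma lincomb_eq_in a b G1 G2 H1 H2 : eq_in Om G1 H1 -> eq_in Om G2 H2 ->
  eq_in Om (lincomb a G1 b G2) (lincomb a H1 b H2).
Proof. intros E1 E2 x y H. unfold lincomb. rewrite E1, E2; auto. Qed.

Lemma ddir_eq_in v G1 G2 : eq_in Om G1 G2 -> eq_in Om (ddir v G1) (ddir v G2).
Proof. intros E. apply lincomb_eq_in; [apply dx_eq_in|apply dy_eq_in]; exact E. Qed.

Lemma ddirs_eq_in w : forall G1 G2, eq_in Om G1 G2 -> eq_in Om (ddirs w G1) (ddirs w G2).
Proof.
  induction w as [|v w IH]; intros G1 G2 E; simpl; [exact E|].
  apply IH, ddir_eq_in, E.
Qed.

Lemma smooth_in_dx G : smooth_in Om G -> smooth_in Om (dx G).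
Proof. intros P l. exact (P (false :: l)). Qed.

Lemma smooth_in_dy G : smooth_in Om G -> smooth_in Om (dy G).
Proof. intros P l. exact (P (true :: l)). Qed.

Lemma dx_lincomb a b G1 G2 : smooth_in Om G1 -> smooth_in Om G2 ->
  eq_in Om (dx (lincomb a G1 b G2)) (lincomb a (dx G1) b (dx G2)).
Proof.
  intros P1 P2 x y H. unfold dx, lincomb.
  destruct (differentiable_pt_ex_derive G1 x y (P1 nil x y H)) as [E1 _].
  destruct (differentiable_pt_ex_derive G2 x y (P2 nil x y H)) as [E2 _].
  rewrite Derive_plus by now apply ex_derive_scal.
  now rewrite !Derive_scal.
Qed.

Lemma dy_lincomb a b G1 G2 : smooth_in Om G1 -> smooth_in Om G2 ->
  eq_in Om (dy (lincomb a G1 b G2)) (lincomb a (dy G1) b (dy G2)).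
Proof.
  intros P1 P2 x y H. unfold dy, lincomb.
  destruct (differentiable_pt_ex_derive G1 x y (P1 nil x y H)) as [_ E1].
  destruct (differentiable_pt_ex_derive G2 x y (P2 nil x y H)) as [_ E2].
  rewrite Derive_plus by now apply ex_derive_scal.
  now rewrite !Derive_scal.
Qed.

Lemma pderiv_lincomb l : forall a b G1 G2, smooth_in Om G1 -> smooth_in Om G2 ->
  eq_in Om (pderiv l (lincomb a G1 b G2)) (lincomb a (pderiv l G1) b (pderiv l G2)).
Proof.
  induction l as [|[] l IH]; intros a b G1 G2 P1 P2; simpl.
  - intros x y _; reflexivity.
  - eapply eq_in_trans; [apply pderiv_eq_in, dy_lincomb; auto|].
    apply IH; apply smooth_in_dy; auto.
  - eapply eq_in_trans; [apply pderiv_eq_in, dx_lincomb; auto|].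
    apply IH; apply smooth_in_dx; auto.
Qed.

Lemma smooth_in_lincomb a b G1 G2 : smooth_in Om G1 -> smooth_in Om G2 ->
  smooth_in Om (lincomb a G1 b G2).
Proof.
  intros P1 P2 l x y H.
  destruct (differentiable_pt_lincomb a b _ _ x y (P1 l x y H) (P2 l x y H)) as [lx [ly D]].
  exists lx, ly. eapply differentiable_pt_lim_ext; [|exact D].
  eapply locally_2d_impl; [|exact (locally_2d_in x y H)].
  apply locally_2d_forall. intros u v Huv. symmetry. exact (pderiv_lincomb l a b G1 G2 P1 P2 u v Huv).
Qed.

Lemma smooth_in_ddir v G : smooth_in Om G -> smooth_in Om (ddir v G).
Proof. intros P. apply smooth_in_lincomb; [apply smooth_in_dx|apply smooth_in_dy]; exact P. Qed.

Lemma smooth_in_ddirs w : forall G, smooth_in Om G -> smooth_in Om (ddirs w G).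
Proof.
  induction w as [|v w IH]; intros G P; simpl; [exact P|].
  apply IH, smooth_in_ddir, P.
Qed.

Lemma ddir_lincomb v a b G1 G2 : smooth_in Om G1 -> smooth_in Om G2 ->
  eq_in Om (ddir v (lincomb a G1 b G2)) (lincomb a (ddir v G1) b (ddir v G2)).
Proof.
  intros P1 P2 x y H. unfold ddir at 1, lincomb at 1.
  rewrite (dx_lincomb a b G1 G2 P1 P2 x y H), (dy_lincomb a b G1 G2 P1 P2 x y H).
  unfold ddir, lincomb. ring.
Qed.

Lemma ddirs_lincomb w : forall a b G1 G2, smooth_in Om G1 -> smooth_in Om G2 ->
  eq_in Om (ddirs w (lincomb a G1 b G2)) (lincomb a (ddirs w G1) b (ddirs w G2)).
Proof.
  induction w as [|v w IH]; intros a b G1 G2 P1 P2; simpl.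
  - intros x y _; reflexivity.
  - eapply eq_in_trans; [apply ddirs_eq_in, ddir_lincomb; auto|].
    apply IH; apply smooth_in_ddir; auto.
Qed.

Lemma dx_dy_comm G : smooth_in Om G -> eq_in Om (dx (dy G)) (dy (dx G)).
Proof.
  intros P x y H. apply Schwarz.
  - eapply locally_2d_impl; [|exact (locally_2d_in x y H)].
    apply locally_2d_forall. intros u v Huv.
    destruct (differentiable_pt_ex_derive G u v (P nil u v Huv)) as [Gx Gy].
    destruct (differentiable_pt_ex_derive (dy G) u v (P (true :: nil) u v Huv)) as [Gyx _].
    destruct (differentiable_pt_ex_derive (dx G) u v (P (false :: nil) u v Huv)) as [_ Gxy].
    now repeat split.
  - apply differentiable_continuity_pt. exact (P (true :: false :: nil) x y H).
  - apply differentiable_continuity_pt. exact (P (false :: true :: nil) x y H).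
Qed.

Lemma ddir_ddir G v w : smooth_in Om G -> forall x y, Om (x, y) ->
  ddir v (ddir w G) x y = fst v * fst w * dx (dx G) x y + fst v * snd w * dx (dy G) x y
    + snd v * fst w * dy (dx G) x y + snd v * snd w * dy (dy G) x y.
Proof.
  intros P x y H. unfold ddir at 1, lincomb at 1, ddir.
  rewrite (dx_lincomb _ _ _ _ (smooth_in_dx G P) (smooth_in_dy G P) x y H).
  rewrite (dy_lincomb _ _ _ _ (smooth_in_dx G P) (smooth_in_dy G P) x y H).
  unfold lincomb. ring.
Qed.

Lemma ddir_comm v w G : smooth_in Om G -> eq_in Om (ddir v (ddir w G)) (ddir w (ddir v G)).
Proof.
  intros P x y H. rewrite !(ddir_ddir G _ _ P x y H), (dx_dy_comm G P x y H). ring.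
Qed.

Lemma ddirs_perm w w' : Permutation w w' -> forall G, smooth_in Om G ->
  eq_in Om (ddirs w G) (ddirs w' G).
Proof.
  induction 1 as [|v w w' _ IH|v v' w|w w' w'' _ IH1 _ IH2]; intros G P; simpl.
  - intros x y _; reflexivity.
  - apply IH, smooth_in_ddir, P.
  - apply ddirs_eq_in, ddir_comm, P.
  - eapply eq_in_trans; [apply IH1|apply IH2]; exact P.
Qed.

Lemma pderiv_ddirs l : forall G, eq_in Om (pderiv l G) (ddirs (map (frame (1, 0) (0, 1)) l) G).
Proof.
  induction l as [|bit l IH]; intros G; simpl; [intros x y _; reflexivity|].
  eapply eq_in_trans; [apply IH|]. apply ddirs_eq_in.
  intros x y _. unfold ddir, lincomb. destruct bit; simpl; ring.
Qed.

Lemma ddirs_multilinear (a b : R * R) (ca cb : R * R -> R) :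
  (forall v, fst v = ca v * fst a + cb v * fst b /\ snd v = ca v * snd a + cb v * snd b) ->
  forall pre v post G, smooth_in Om G ->
  eq_in Om (ddirs (pre ++ v :: post) G)
    (lincomb (ca v) (ddirs (pre ++ a :: post) G) (cb v) (ddirs (pre ++ b :: post) G)).
Proof.
  intros Hab pre v post G P. rewrite !ddirs_app. simpl.
  assert (PK : smooth_in Om (ddirs pre G)) by now apply smooth_in_ddirs.
  eapply eq_in_trans; [|apply ddirs_lincomb; apply smooth_in_ddir, PK].
  apply ddirs_eq_in. intros x y _. unfold ddir, lincomb.
  destruct (Hab v) as [E1 E2]. rewrite E1, E2. ring.
Qed.

Lemma ddirs_repeat_eq0_of_segment G x y e h : smooth_in Om G -> 0 < h ->
  (forall t, 0 <= t <= h -> Om (x + t * fst e, y + t * snd e)) ->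
  (forall t, 0 <= t <= h -> G (x + t * fst e) (y + t * snd e) = 0) ->
  forall k, ddirs (repeat e k) G x y = 0.
Proof.
  intros P Hh HOm HG.
  assert (Hopen : forall k t, 0 < t < h -> ddirs (repeat e k) G (x + t * fst e) (y + t * snd e) = 0).
  { induction k as [|k IH]; [intros t Ht; apply HG; lra|].
    rewrite ddirs_repeat_S. apply ddir_eq0_on_open_segment; [|exact IH].
    intros t Ht. apply (smooth_in_ddirs _ G P nil), HOm. lra. }
  intros k.
  set (phi := fun s => ddirs (repeat e k) G (x + s * fst e) (y + s * snd e)).
  replace (ddirs (repeat e k) G x y) with (phi 0) by (unfold phi; f_equal; ring).
  apply (eq0_at_left_endpoint phi h Hh); [|exact (Hopen k)].
  apply derivable_continuous_pt. eexists. apply derivable_pt_lim_along_line.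
  apply (smooth_in_ddirs _ G P nil), HOm. lra.
Qed.

End Directional_derivatives.

Lemma count_true_eq0 bs : count_occ Bool.bool_dec bs true = 0%nat -> bs = repeat false (length bs).
Proof. intros H. apply (count_occ_repeat_excl Bool.bool_dec). intros [] Hne; [exact H|contradiction]. Qed.

Lemma count_true_pos bs : (0 < count_occ Bool.bool_dec bs true)%nat ->
  exists r, Permutation bs (true :: r).
Proof.
  intros H. apply count_occ_In in H. destruct (in_split _ _ H) as [l1 [l2 ->]].
  exists (l1 ++ l2). symmetry. apply Permutation_middle.
Qed.

Section Symmetric_tensors.

Variables (a b : R * R) (ca cb : R * R -> R) (T : list (R * R) -> R).
Hypothesis T_multilinear : forall pre v post,
  T (pre ++ v :: post) = ca v * T (pre ++ a :: post) + cb v * T (pre ++ b :: post).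

Lemma multilinear_eq0 m : (forall bs, length bs = m -> T (map (frame a b) bs) = 0) ->
  forall w, length w = m -> T w = 0.
Proof.
  intros Hbasis.
  assert (Hsuffix : forall post bs, (length bs + length post = m)%nat ->
            T (map (frame a b) bs ++ post) = 0).
  { induction post as [|v post IH]; intros bs Hl.
    - rewrite app_nil_r. apply Hbasis. simpl in Hl. lia.
    - rewrite T_multilinear.
      replace (map (frame a b) bs ++ a :: post) with (map (frame a b) (bs ++ false :: nil) ++ post)
        by (rewrite map_app, <- app_assoc; reflexivity).
      replace (map (frame a b) bs ++ b :: post) with (map (frame a b) (bs ++ true :: nil) ++ post)
        by (rewrite map_app, <- app_assoc; reflexivity).
      rewrite !IH; [ring| |]; rewrite length_app; simpl in *; lia. }
  intros w Hw. apply (Hsuffix w nil). simpl. lia.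
Qed.

(* By symmetry every basis word reduces to [b^j a^(S N - j)], and the trace relation
   lowers [j] by two, down to the given cases [j = 0] and [j = 1]. *)
Lemma traceless_symmetric_eq0 N :
  (forall w w', Permutation w w' -> T w = T w') ->
  (forall r, (length r + 2 = S N)%nat -> T (a :: a :: r) + T (b :: b :: r) = 0) ->
  T (repeat a (S N)) = 0 -> T (b :: repeat a N) = 0 ->
  forall w, length w = S N -> T w = 0.
Proof.
  intros T_sym T_trace Ta Tb. apply multilinear_eq0.
  set (cnt := fun bs => count_occ Bool.bool_dec bs true).
  enough (Hk : forall k bs, (cnt bs <= k)%nat -> length bs = S N -> T (map (frame a b) bs) = 0)
    by (intros bs; exact (Hk _ bs (le_n _))).
  induction k as [|k IH]; intros bs Hk Hl.
  - rewrite (count_true_eq0 bs ltac:(unfold cnt in Hk; lia)), map_repeat, Hl. exact Ta.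
  - destruct (Nat.eq_dec (cnt bs) 0) as [C0|C0]; [apply IH; lia|].
    destruct (count_true_pos bs ltac:(unfold cnt in C0; lia)) as [r Hr].
    rewrite (T_sym _ _ (Permutation_map (frame a b) Hr)). simpl.
    pose proof (proj1 (Permutation_count_occ Bool.bool_dec _ _) Hr true) as Cr.
    assert (Lr : length r = N) by (apply Permutation_length in Hr; simpl in Hr; lia).
    destruct (Nat.eq_dec (cnt r) 0) as [Cr0|Cr0].
    + now rewrite (count_true_eq0 r Cr0), map_repeat, Lr.
    + destruct (count_true_pos r ltac:(unfold cnt in Cr0; lia)) as [r' Hr'].
      pose proof (proj1 (Permutation_count_occ Bool.bool_dec _ _) Hr' true) as Cr'.
      assert (Lr' : (length r' + 2 = S N)%nat) by (apply Permutation_length in Hr'; simpl in Hr'; lia).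
      rewrite (T_sym _ _ (perm_skip _ (Permutation_map (frame a b) Hr'))). simpl.
      specialize (T_trace (map (frame a b) r') ltac:(rewrite length_map; lia)).
      change (T (a :: a :: map (frame a b) r')) with (T (map (frame a b) (false :: false :: r')))
        in T_trace.
      rewrite (IH (false :: false :: r')) in T_trace by (unfold cnt in *; simpl in *; lia).
      lra.
Qed.

End Symmetric_tensors.

Definition perp (v : R * R) : R * R := (- snd v, fst v).

(* Coordinates of [v] in the frame [(a, perp a)]: for unit [a] this is [v / a],
   vectors being read as complex numbers. *)
Definition coord (a v : R * R) : C :=
  (fst v * fst a + snd v * snd a, snd v * fst a - fst v * snd a).

Definition cis (t : R) : C := (cos t, sin t).

Definition cprod (c : R * R -> C) (w : list (R * R)) : C :=
  fold_right (fun v z => (c v * z)%C) 1%C w.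

Lemma Cmult_cis s t : (cis s * cis t)%C = cis (s + t).
Proof. unfold cis, Cmult; simpl. rewrite cos_plus, sin_plus. f_equal; ring. Qed.

Section Unit_frame.

Variable a : R * R.
Hypothesis a_unit : fst a ^ 2 + snd a ^ 2 = 1.

Lemma frame_decomp v :
  fst v = Re (coord a v) * fst a + Im (coord a v) * fst (perp a) /\
  snd v = Re (coord a v) * snd a + Im (coord a v) * snd (perp a).
Proof.
  unfold coord, perp; simpl. split.
  - transitivity (fst v * (fst a ^ 2 + snd a ^ 2)); [rewrite a_unit|]; ring.
  - transitivity (snd v * (fst a ^ 2 + snd a ^ 2)); [rewrite a_unit|]; ring.
Qed.

Lemma coord_self : coord a a = 1%C.
Proof. unfold coord; simpl. rewrite <- a_unit. unfold RtoC. f_equal; ring. Qed.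

Lemma coord_perp : coord a (perp a) = Ci.
Proof. unfold coord, perp, Ci; simpl. rewrite <- a_unit. f_equal; ring. Qed.

Lemma coord_rot t v : coord a (rot t v) = (cis t * coord a v)%C.
Proof. unfold coord, rot, cis, Cmult; simpl. f_equal; ring. Qed.

Lemma coord_decomp v : coord a v = (Re (coord a v) * coord a a + Im (coord a v) * coord a (perp a))%C.
Proof.
  rewrite coord_self, coord_perp. destruct (coord a v) as [p q].
  unfold Cplus, Cmult, Ci, RtoC; simpl. f_equal; ring.
Qed.

End Unit_frame.

Lemma cprod_multilinear (c : R * R -> C) (a b : R * R) pre v post :
  c v = (Re (c v) * c a + Im (c v) * c b)%C ->
  cprod c (pre ++ v :: post)
  = (Re (c v) * cprod c (pre ++ a :: post) + Im (c v) * cprod c (pre ++ b :: post))%C.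
Proof.
  intros Hv. induction pre as [|u pre IH]; simpl.
  - rewrite Hv at 1. ring.
  - rewrite IH. ring.
Qed.

Lemma cprod_perm c w w' : Permutation w w' -> cprod c w = cprod c w'.
Proof. induction 1; simpl; congruence || ring. Qed.

Lemma cprod_repeat c v t k : c v = cis t -> cprod c (repeat v k) = cis (INR k * t).
Proof.
  intros Hv. induction k as [|k IH]; simpl.
  - unfold cis. rewrite Rmult_0_l, cos_0, sin_0. reflexivity.
  - rewrite IH, Hv, Cmult_cis. f_equal. destruct k; simpl; ring.
Qed.

Section Helmholtz.

Variables (Om : R * R -> Prop) (lam : R) (F : R -> R -> R).
Hypothesis Om_open : open Om.
Hypothesis F_smooth : smooth_in Om F.
Hypothesis F_helmholtz : forall x y, Om (x, y) -> dx (dx F) x y + dy (dy F) x y = - lam * F x y.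

Lemma ddirs_traceless a r x y : fst a ^ 2 + snd a ^ 2 = 1 -> Om (x, y) ->
  ddirs (a :: a :: r) F x y + ddirs (perp a :: perp a :: r) F x y = - lam * ddirs r F x y.
Proof.
  intros Ha H.
  assert (Hlap : eq_in Om (lincomb 1 (ddir a (ddir a F)) 1 (ddir (perp a) (ddir (perp a) F)))
                          (lincomb (- lam) F 0 F)).
  { intros u v Huv. unfold lincomb. rewrite !(ddir_ddir Om F _ _ F_smooth u v Huv).
    rewrite (dx_dy_comm Om Om_open F F_smooth u v Huv), <- F_helmholtz by exact Huv.
    unfold perp; simpl.
    transitivity ((fst a ^ 2 + snd a ^ 2) * (dx (dx F) u v + dy (dy F) u v)); [ring|].
    rewrite Ha. ring. }
  pose proof (smooth_in_ddir Om Om_open a _ (smooth_in_ddir Om Om_open a F F_smooth)) as Paa.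
  pose proof (smooth_in_ddir Om Om_open (perp a) _
                (smooth_in_ddir Om Om_open (perp a) F F_smooth)) as Pbb.
  simpl. transitivity (ddirs r (lincomb (- lam) F 0 F) x y).
  - rewrite <- (ddirs_eq_in Om Om_open r _ _ Hlap x y H).
    rewrite (ddirs_lincomb Om Om_open r _ _ _ _ Paa Pbb x y H). unfold lincomb. ring.
  - rewrite (ddirs_lincomb Om Om_open r _ _ _ _ F_smooth F_smooth x y H). unfold lincomb. ring.
Qed.

Lemma ddirs_vanish_next_order x y a t N : Om (x, y) -> fst a ^ 2 + snd a ^ 2 = 1 ->
  (forall w, (length w < S N)%nat -> ddirs w F x y = 0) ->
  ddirs (repeat a (S N)) F x y = 0 ->
  ddirs (rot (PI / 2) (rot t a) :: repeat (rot t a) N) F x y = 0 ->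
  cos (INR (S N) * t) <> 0 ->
  forall w, length w = S N -> ddirs w F x y = 0.
Proof.
  intros H Ha below nodal robin Hcos.
  set (B := ddirs (perp a :: repeat a N) F x y).
  assert (Haa : coord a a = cis 0)
    by (rewrite coord_self by exact Ha; unfold cis; now rewrite cos_0, sin_0).
  assert (T0 : forall w, length w = S N -> ddirs w F x y - B * Im (cprod (coord a) w) = 0).
  { apply (traceless_symmetric_eq0 a (perp a) (fun v => Re (coord a v)) (fun v => Im (coord a v))).
    - intros pre v post.
      rewrite (ddirs_multilinear Om Om_open a (perp a) _ _ (frame_decomp a Ha)
                 pre v post F F_smooth x y H).
      rewrite (cprod_multilinear _ a (perp a) pre v post (coord_decomp a Ha v)).
      unfold lincomb. rewrite !im_plus, !im_scal_l. ring.
    - intros w w' Hp.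
      now rewrite (ddirs_perm Om Om_open w w' Hp F F_smooth x y H), (cprod_perm _ _ _ Hp).
    - intros r Hr. unfold cprod; cbn [fold_right]; fold (cprod (coord a) r).
      rewrite coord_self, coord_perp by exact Ha.
      pose proof (ddirs_traceless a r x y Ha H) as Htr. simpl in Htr.
      rewrite below in Htr by lia. destruct (cprod (coord a) r) as [p q].
      unfold Cmult, Ci, Im; simpl. lra.
    - rewrite (cprod_repeat _ _ _ _ Haa), Rmult_0_r, nodal. unfold cis, Im; simpl. rewrite sin_0. ring.
    - unfold cprod; cbn [fold_right]; fold (cprod (coord a) (repeat a N)).
      rewrite (cprod_repeat _ _ _ _ Haa), coord_perp, Rmult_0_r by exact Ha.
      fold B. unfold cis, Ci, Cmult, Im; simpl. rewrite cos_0, sin_0. ring. }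
  assert (HB : B = 0).
  { pose proof (T0 (rot (PI / 2) (rot t a) :: repeat (rot t a) N)
                  ltac:(simpl; now rewrite repeat_length)) as E.
    rewrite robin in E.
    unfold cprod in E; cbn [fold_right] in E; fold (cprod (coord a) (repeat (rot t a) N)) in E.
    assert (Hrot : coord a (rot t a) = cis t)
      by (rewrite coord_rot, Haa, Cmult_cis by exact Ha; f_equal; ring).
    rewrite (cprod_repeat _ _ _ _ Hrot), coord_rot, Hrot, !Cmult_cis in E by exact Ha.
    unfold cis, Im in E; simpl in E.
    replace (PI / 2 + t + INR N * t) with (PI / 2 + INR (S N) * t) in E by (rewrite S_INR; ring).
    rewrite <- cos_sin in E.
    destruct (Rmult_integral B (cos (INR (S N) * t)) ltac:(lra)) as [HB|HB];
      [exact HB|contradiction]. }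
  intros w Hw. pose proof (T0 w Hw) as E. rewrite HB in E. lra.
Qed.

End Helmholtz.

Definition vanish_below (N : nat) (u : R -> R -> C) (x y : R) : Prop :=
  forall w, (length w < N)%nat -> ddirs w (ure u) x y = 0 /\ ddirs w (uim u) x y = 0.

Lemma cos_multiple_angle_neq0 alpha n M : 0 < alpha < 1 -> (M <= n - 1)%nat ->
  (forall p q : nat, (1 <= p <= n - 1)%nat -> (q <= p - 1)%nat ->
      alpha <> (2 * INR q + 1) / (2 * INR p)) ->
  cos (INR M * (alpha * PI)) <> 0.
Proof.
  intros Ha HM Hpq Hcos. destruct M as [|M].
  - rewrite Rmult_0_l, cos_0 in Hcos. lra.
  - destruct (cos_eq_0_0 _ Hcos) as [k Hk].
    pose proof PI_RGT_0 as HPI.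
    assert (HMpos : 0 < INR (S M)) by apply lt_0_INR, Nat.lt_0_succ.
    assert (E : INR (S M) * alpha = IZR k + / 2).
    { apply Rmult_eq_reg_r with PI; [|lra]. rewrite Rmult_assoc, Hk. field. }
    assert (k_nonneg : (-1 < k)%Z) by (apply lt_IZR; nra).
    assert (k_lt : (k < Z.of_nat (S M))%Z) by (apply lt_IZR; rewrite <- INR_IZR_INZ; nra).
    apply (Hpq (S M) (Z.to_nat k)); [lia|lia|].
    rewrite INR_IZR_INZ, Z2Nat.id by lia.
    apply Rmult_eq_reg_l with (2 * INR (S M)); [|lra].
    field_simplify; lra.
Qed.

Lemma segment_at x y e h t : 0 <= t <= h -> segment (x, y) e h (x + t * fst e, y + t * snd e).
Proof. now exists t. Qed.

Lemma segment_origin x y e h : 0 <= h -> segment (x, y) e h (x, y).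
Proof. intros Hh. exists 0. split; [lra|simpl; f_equal; ring]. Qed.

Section Complex_solution.

Variables (Om : R * R -> Prop) (u : R -> R -> C).
Hypothesis Om_open : open Om.
Hypothesis u_smooth : smooth_on Om u.

Lemma smooth_in_ure : smooth_in Om (ure u).
Proof. intros l x y H. exact (proj1 (u_smooth l (x, y) H)). Qed.

Lemma smooth_in_uim : smooth_in Om (uim u).
Proof. intros l x y H. exact (proj2 (u_smooth l (x, y) H)). Qed.

Lemma nodal_line_ddirs x y e h : 0 < h ->
  (forall p, segment (x, y) e h p -> Om p) -> nodal_line (segment (x, y) e h) u ->
  forall k, ddirs (repeat e k) (ure u) x y = 0 /\ ddirs (repeat e k) (uim u) x y = 0.
Proof.
  intros Hh Hseg Hnod k.
  split; apply (ddirs_repeat_eq0_of_segment Om Om_open _ x y e h) with (2 := Hh);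
    try exact smooth_in_ure; try exact smooth_in_uim; intros t Ht; auto using segment_at.
  - exact (f_equal fst (Hnod _ (segment_at x y e h t Ht))).
  - exact (f_equal snd (Hnod _ (segment_at x y e h t Ht))).
Qed.

Lemma gen_singular_line_ddirs x y e nu c h : 0 < h ->
  (forall p, segment (x, y) e h p -> Om p) -> gen_singular_line (segment (x, y) e h) nu c u ->
  forall k,
    ddirs (nu :: repeat e k) (ure u) x y
      + (Re c * ddirs (repeat e k) (ure u) x y - Im c * ddirs (repeat e k) (uim u) x y) = 0 /\
    ddirs (nu :: repeat e k) (uim u) x y
      + (Re c * ddirs (repeat e k) (uim u) x y + Im c * ddirs (repeat e k) (ure u) x y) = 0.
Proof.
  intros Hh Hseg [_ Hsing] k.
  pose proof (Hseg _ (segment_origin x y e h (Rlt_le _ _ Hh))) as Hx.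
  pose proof smooth_in_ure as Pre. pose proof smooth_in_uim as Pim.
  assert (Hrobin : forall a b G1 G2, smooth_in Om G1 -> smooth_in Om G2 ->
            (forall t, 0 <= t <= h ->
               lincomb 1 (ddir nu G1) 1 (lincomb a G1 b G2) (x + t * fst e) (y + t * snd e) = 0) ->
            ddirs (nu :: repeat e k) G1 x y
              + (a * ddirs (repeat e k) G1 x y + b * ddirs (repeat e k) G2 x y) = 0).
  { intros a b G1 G2 P1 P2 H0.
    pose proof (ddirs_repeat_eq0_of_segment Om Om_open _ x y e h
      (smooth_in_lincomb Om Om_open 1 1 _ _ (smooth_in_ddir Om Om_open nu G1 P1)
         (smooth_in_lincomb Om Om_open a b G1 G2 P1 P2))
      Hh (fun t Ht => Hseg _ (segment_at x y e h t Ht)) H0 k) as E.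
    rewrite (ddirs_lincomb Om Om_open _ 1 1 _ _ (smooth_in_ddir Om Om_open nu G1 P1)
               (smooth_in_lincomb Om Om_open a b G1 G2 P1 P2) x y Hx) in E.
    unfold lincomb at 1 in E.
    rewrite (ddirs_lincomb Om Om_open _ a b G1 G2 P1 P2 x y Hx) in E.
    unfold lincomb in E. simpl. lra. }
  split.
  - refine (eq_trans _ (Hrobin (Re c) (- Im c) _ _ Pre Pim _)); [ring|]. intros t Ht.
    pose proof (f_equal fst (Hsing _ (segment_at x y e h t Ht))) as E. simpl in E. rewrite <- E.
    unfold ddir, lincomb, normal_deriv, cdx, cdy, ure, uim, Re, Im. simpl. ring.
  - apply (Hrobin (Re c) (Im c) _ _ Pim Pre). intros t Ht.
    pose proof (f_equal snd (Hsing _ (segment_at x y e h t Ht))) as E. simpl in E. rewrite <- E.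
    unfold ddir, lincomb, normal_deriv, cdx, cdy, ure, uim, Re, Im. simpl. ring.
Qed.

Variable lam : R.
Hypothesis u_helmholtz : helmholtz_on Om lam u.

Lemma ure_helmholtz x y : Om (x, y) -> dx (dx (ure u)) x y + dy (dy (ure u)) x y = - lam * ure u x y.
Proof.
  intros H. pose proof (f_equal fst (u_helmholtz (x, y) H)) as E.
  unfold laplacian, Copp, Cmult, RtoC in E; simpl in E. change (ure u x y) with (fst (u x y)). lra.
Qed.

Lemma uim_helmholtz x y : Om (x, y) -> dx (dx (uim u)) x y + dy (dy (uim u)) x y = - lam * uim u x y.
Proof.
  intros H. pose proof (f_equal snd (u_helmholtz (x, y) H)) as E.
  unfold laplacian, Copp, Cmult, RtoC in E; simpl in E. change (uim u x y) with (snd (u x y)). lra.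
Qed.

Lemma vanish_below_succ x y a t c h N : 0 < h -> fst a ^ 2 + snd a ^ 2 = 1 ->
  (forall p, segment (x, y) a h p -> Om p) -> nodal_line (segment (x, y) a h) u ->
  (forall p, segment (x, y) (rot t a) h p -> Om p) ->
  gen_singular_line (segment (x, y) (rot t a) h) (rot (PI / 2) (rot t a)) c u ->
  cos (INR N * t) <> 0 -> vanish_below N u x y -> vanish_below (S N) u x y.
Proof.
  intros Hh Ha Hseg_nod Hnod Hseg_sing Hsing Hcos Hbelow w Hw.
  destruct (Nat.lt_ge_cases (length w) N) as [Hlt|Hge]; [now apply Hbelow|].
  assert (Hlen : length w = N) by lia.
  pose proof (nodal_line_ddirs x y a h Hh Hseg_nod Hnod) as Hnodal.
  pose proof (Hseg_nod _ (segment_origin x y a h (Rlt_le _ _ Hh))) as Hx.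
  destruct N as [|N].
  - destruct w; [exact (Hnodal 0%nat)|discriminate].
  - destruct (gen_singular_line_ddirs x y _ _ c h Hh Hseg_sing Hsing N) as [Sre Sim].
    destruct (Hbelow (repeat (rot t a) N) ltac:(rewrite repeat_length; lia)) as [Zre Zim].
    rewrite Zre, Zim in Sre, Sim.
    split.
    + exact (ddirs_vanish_next_order Om lam (ure u) Om_open smooth_in_ure ure_helmholtz x y a t N
               Hx Ha (fun w' Hw' => proj1 (Hbelow w' Hw')) (proj1 (Hnodal (S N))) ltac:(lra) Hcos
               w Hlen).
    + exact (ddirs_vanish_next_order Om lam (uim u) Om_open smooth_in_uim uim_helmholtz x y a t N
               Hx Ha (fun w' Hw' => proj2 (Hbelow w' Hw')) (proj2 (Hnodal (S N))) ltac:(lra) Hcos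
               w Hlen).
Qed.

Lemma vanishes_up_to_order_of_below n x y : Om (x, y) -> vanish_below n u x y ->
  vanishes_up_to_order n u (x, y).
Proof.
  intros Hx Hbelow l Hl. simpl.
  rewrite !(pderiv_ddirs Om Om_open l _ x y Hx). apply Hbelow. now rewrite length_map.
Qed.

End Complex_solution.

Theorem theorem3p5
  (Om : R * R -> Prop) (lam : R) (u : R -> R -> C)
  (x0 : R * R) (h alpha : R) (em : R * R) (C2 : C) (n : nat) :
  open Om ->
  0 < lam ->
  smooth_on Om u ->
  helmholtz_on Om lam u ->
  Om x0 ->
  0 < h ->
  0 < alpha < 1 ->
  fst em ^ 2 + snd em ^ 2 = 1 ->
  (forall p, segment x0 (rot (alpha * PI) em) h p -> Om p) ->
  (forall p, segment x0 em h p -> Om p) ->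
  gen_singular_line (segment x0 (rot (alpha * PI) em) h)
                    (rot (PI / 2) (rot (alpha * PI) em)) C2 u ->
  nodal_line (segment x0 em h) u ->
  (2 <= n)%nat ->
  (forall p q : nat, (1 <= p <= n - 1)%nat -> (q <= p - 1)%nat ->
      alpha <> (2 * INR q + 1) / (2 * INR p)) ->
  vanishes_up_to_order n u x0.
Proof.
  intros Om_open _ u_smooth u_helmholtz Hx0 Hh Halpha Hem Hseg_sing Hseg_nod Hsing Hnod _ Hpq.
  destruct x0 as [x y].
  apply (vanishes_up_to_order_of_below Om u Om_open n x y Hx0).
  enough (Hbelow : forall N, (N <= n)%nat -> vanish_below N u x y) by now apply Hbelow.
  induction N as [|N IH]; intros HN; [intros w Hw; simpl in Hw; lia|].
  apply (vanish_below_succ Om u Om_open u_smooth lam u_helmholtz x y em (alpha * PI) C2 h);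
    auto.
  - apply (cos_multiple_angle_neq0 alpha n); auto. lia.
  - apply IH. lia.
Qed.
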